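(* Let $K$ be an uncountable algebraically closed field and let $(X_n,f_{nm})$ be a projective sequence of nonempty constructible sets over $K$. Then $\varprojlim X_n\neq\varnothing$.
   Context: $\mathbb N=\{0,1,2,\dots\}$. A projective sequence of sets $(X_n,f_{nm})$ is a sequence of sets $X_n$ ($n\in\mathbb N$) with maps $f_{nm}\colon X_m\to X_n$ for $m\ge n$ such that $f_{nn}=\mathrm{Id}$ and $f_{nk}=f_{nm}\circ f_{mk}$ for $k\ge m\ge n$; its projective limit is the set of $(x_n)\in\prod_n X_n$ with $x_n=f_{nm}(x_m)$ for all $m\ge n$. Affine algebraic sets over $K$ are zero sets of families of polynomials in some $K^m$, carrying the Zariski topology; regular maps are restrictions of polynomial maps. A subset of an affine algebraic set $A$ is locally closed if it is the intersection of an open and a closed subset of $A$, and constructible if it is a finite union of locally closed subsets. $(X_n,f_{nm})$ is a projective sequence of constructible sets over $K$ if there is a projective sequence $(A_n,F_{nm})$ of affine algebraic sets $A_n$ over $K$ and regular maps $F_{nm}\colon A_m\to A_n$ such that each $X_n$ is a constructible subset of $A_n$, $F_{nm}(X_m)\subset X_n$, and $f_{nm}$ is the restriction of $F_{nm}$ to $X_m$, for all $m\ge n$. *)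

From HB Require Import structures.
From mathcomp Require Import all_boot all_order all_algebra.
Set Implicit Arguments. Unset Strict Implicit. Unset Printing Implicit Defensive.
Import GRing.Theory.
Local Open Scope ring_scope.

(* Polynomial expressions in the m variables x_0, ..., x_(m-1) with
   coefficients in K (syntax; they are only used through evaluation). *)
Inductive mpoly (K : Type) (m : nat) : Type :=
| PVar of 'I_m
| PConst of K
| PAdd of mpoly K m & mpoly K m
| PMul of mpoly K m & mpoly K m
| POpp of mpoly K m.

Fixpoint meval (K : nzRingType) (m : nat) (x : 'rV[K]_m) (p : mpoly K m) : K :=
  match p with
  | PVar i => x 0 i
  | PConst c => c
  | PAdd p q => meval x p + meval x q
  | PMul p q => meval x p * meval x q
  | POpp p => - meval x p
  end.

Section Zariski.
Variables (K : nzRingType) (m : nat).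

Definition zero_set (S : mpoly K m -> Prop) : 'rV[K]_m -> Prop :=
  fun x => forall p, S p -> meval x p = 0.

Definition algebraic_set (A : 'rV[K]_m -> Prop) : Prop :=
  exists S, forall x, A x <-> zero_set S x.

Definition closed_in (A C : 'rV[K]_m -> Prop) : Prop :=
  exists S, forall x, C x <-> (A x /\ zero_set S x).

Definition open_in (A U : 'rV[K]_m -> Prop) : Prop :=
  exists C, closed_in A C /\ forall x, U x <-> (A x /\ ~ C x).

Definition locally_closed_in (A L : 'rV[K]_m -> Prop) : Prop :=
  exists U C, open_in A U /\ closed_in A C /\ forall x, L x <-> (U x /\ C x).

Definition constructible_in (A X : 'rV[K]_m -> Prop) : Prop :=
  exists (k : nat) (L : 'I_k -> 'rV[K]_m -> Prop),
    (forall i, locally_closed_in A (L i)) /\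
    forall x, X x <-> exists i, L i x.
End Zariski.

Definition poly_map (K : nzRingType) (a b : nat) (P : 'I_b -> mpoly K a)
  (x : 'rV[K]_a) : 'rV[K]_b := \row_j meval x (P j).

Definition regular_map (K : nzRingType) (a b : nat)
  (A : 'rV[K]_a -> Prop) (B : 'rV[K]_b -> Prop) (f : 'rV[K]_a -> 'rV[K]_b) : Prop :=
  (forall x, A x -> B (f x)) /\
  exists P : 'I_b -> mpoly K a, forall x, A x -> f x = poly_map P x.

Definition uncountable (T : Type) : Prop :=
  ~ exists f : nat -> T, forall y, exists n, f n = y.

From HB Require Import structures.
From mathcomp Require Import all_boot all_order all_algebra all_field.
From Stdlib Require Import Classical ClassicalEpsilon.
Set Implicit Arguments. Unset Strict Implicit. Unset Printing Implicit Defensive.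
Import GRing.Theory.
Local Open Scope ring_scope.

(* Encode a sequence of points x_n of K^(d n) as a single sequence of elements of K, the
   coordinates of x_0, x_1, ... concatenated.  The condition "x_n in X_n, x_(n+1) in
   X_(n+1) and x_n = f_(n,n+1)(x_(n+1))" is then a first-order formula over K in
   finitely many coordinates: by Hilbert's basis theorem every zero set is cut out by
   finitely many polynomials, so constructible sets are definable.  Every finite set of
   these conditions is satisfiable, by the images of a single point of some X_k.  The
   coordinates are chosen one at a time, keeping every finite set of conditions
   satisfiable over the chosen prefix.  By quantifier elimination, the values of the next
   coordinate that keep the first k conditions satisfiable form a finite or cofinite
   subset of K; these subsets decrease with k and are nonempty, and since K is
   uncountable they have a common point. *)

(** * Hilbert's basis theorem *)

Section Ideals.
Variable R : comNzRingType.
Implicit Types (l : seq R) (x y : R).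

Inductive in_ideal l : R -> Prop :=
| in_ideal0 : in_ideal l 0
| in_ideal_cons x r y : x \in l -> in_ideal l y -> in_ideal l (r * x + y).

Lemma mem_in_ideal l x : x \in l -> in_ideal l x.
Proof.
by move=> lx; rewrite -[x]addr0 -[x]mul1r; apply: in_ideal_cons lx (in_ideal0 l).
Qed.

Lemma in_idealD l x y : in_ideal l x -> in_ideal l y -> in_ideal l (x + y).
Proof.
elim=> [|a r z la _ IH] ly; first by rewrite add0r.
by rewrite -addrA; apply: in_ideal_cons la (IH ly).
Qed.

Lemma in_idealMl l c x : in_ideal l x -> in_ideal l (c * x).
Proof.
elim=> [|a r z la _ IH]; first by rewrite mulr0; apply: in_ideal0.
by rewrite mulrDr mulrA; apply: in_ideal_cons.
Qed.

Lemma in_ideal_trans l l' x :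
  (forall y, y \in l -> in_ideal l' y) -> in_ideal l x -> in_ideal l' x.
Proof.
move=> ll'; elim=> [|a r z la _ IH]; first exact: in_ideal0.
by apply: in_idealD IH; apply/in_idealMl/ll'.
Qed.

Lemma in_ideal_sub l l' x : {subset l <= l'} -> in_ideal l x -> in_ideal l' x.
Proof. by move=> ll'; apply: in_ideal_trans => y /ll'; apply: mem_in_ideal. Qed.

Definition noetherian := forall S : R -> Prop, exists l : seq R,
  (forall x, x \in l -> S x) /\ (forall x, S x -> in_ideal l x).

End Ideals.

Lemma noetherian_field (F : fieldType) : noetherian F.
Proof.
move=> S; have [[x [Sx x0]]|S0] := classic (exists x, S x /\ x != 0).
  exists [:: x]; split=> [y|y _]; first by rewrite inE => /eqP->.
  by rewrite -[y](divfK x0); apply/in_idealMl/mem_in_ideal; rewrite inE.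
exists [::]; split=> // y Sy.
have -> : y = 0 by apply: NNPP => /eqP y0; apply: S0; exists y.
exact: in_ideal0.
Qed.

Lemma size_sub_lead_cancel (R : nzRingType) (f h : {poly R}) n d :
  (d <= n)%N -> (size f <= n.+1)%N -> (size h <= d.+1)%N -> h`_d = f`_n ->
  (size (f - 'X^(n - d) * h)%R <= n)%N.
Proof.
move=> dn sf sh hd; set f' := f - _.
have sf'1 : (size f' <= n.+1)%N.
  rewrite (leq_trans (size_polyD _ _)) // geq_max sf size_polyN.
  apply: leq_trans (size_polyMleq _ _) _.
  by rewrite size_polyXn addSn /= (leq_trans (leq_add (leqnn _) sh)) // addnS subnK.
rewrite leqNgt; apply/negP => nsf'; have /eqP : lead_coef f' = 0.
  rewrite lead_coefE (_ : size f' = n.+1); last by apply/eqP; rewrite eqn_leq sf'1.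
  by rewrite coefB coefXnM ltnNge leq_subr /= subKn // hd subrr.
by rewrite lead_coef_eq0 => /eqP f'0; rewrite f'0 size_poly0 in nsf'.
Qed.

Section HilbertBasis.
Variable R : comNzRingType.
Hypothesis noethR : noetherian R.
Implicit Types (f g : {poly R}) (G : seq {poly R}) (Q : {poly R} -> Prop).

(* For an ideal Q, the ideal of the leading coefficients of its members of degree d. *)
Definition top_coef Q d (r : R) :=
  exists f, Q f /\ (size f <= d.+1)%N /\ f`_d = r.

Lemma top_coef_sub Q Q' d r :
  (forall f, Q f -> Q' f) -> top_coef Q d r -> top_coef Q' d r.
Proof. by move=> QQ' [f [Qf fP]]; exists f; split; first exact: QQ'. Qed.

Lemma top_coef_leq Q d d' r : (forall f, Q f -> Q ('X * f)) ->
  (d <= d')%N -> top_coef Q d r -> top_coef Q d' r.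
Proof.
move=> QX /subnK <-; elim: (d' - d)%N => // k IH /IH [f [Qf [sf fd]]].
exists ('X * f); split; [exact: QX | split; last by rewrite coefXM].
by apply: leq_trans (size_polyMleq _ _) _; rewrite size_polyX add2n.
Qed.

Lemma top_coef_ideal Q d cs r :
  Q 0 -> (forall f g, Q f -> Q g -> Q (f + g)) -> (forall c f, Q f -> Q (c%:P * f)) ->
  (forall c, c \in cs -> top_coef Q d c) -> in_ideal cs r -> top_coef Q d r.
Proof.
move=> Q0 QD QM csQ; elim=> [|a c z acs _ [f [Qf [sf fd]]]].
  by exists 0; rewrite size_poly0 coef0.
have [g [Qg [sg gd]]] := csQ a acs.
exists (c%:P * g + f); split; first by apply: QD => //; apply: QM.
split; last by rewrite coefD coefCM gd fd.
rewrite (leq_trans (size_polyD _ _)) // geq_max sf andbT mul_polyC.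
exact: leq_trans (size_scale_leq _ _) sg.
Qed.

Lemma top_coef_in_ideal G d cs r : (forall c, c \in cs -> top_coef (in_ideal G) d c) ->
  in_ideal cs r -> top_coef (in_ideal G) d r.
Proof.
by apply: top_coef_ideal; [apply: in_ideal0 | apply: in_idealD | move=> c f; apply: in_idealMl].
Qed.

Section GeneratedIdeal.
Variable S : {poly R} -> Prop.

Definition in_gen_ideal f := exists l, (forall g, g \in l -> S g) /\ in_ideal l f.

Lemma in_gen_ideal_seq G : (forall g, g \in G -> in_gen_ideal g) ->
  exists l, (forall g, g \in l -> S g) /\ (forall g, g \in G -> in_ideal l g).
Proof.
elim: G => [|f G IH] GI; first by exists [::].
have [l [lS lG]] := IH (fun g Gg => GI g (@mem_behead _ (f :: G) g Gg)).
have [l' [l'S l'f]] := GI f (mem_head _ _).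
exists (l' ++ l); split=> [g|g]; first by rewrite mem_cat => /orP[/l'S|/lS].
rewrite inE => /orP[/eqP->|/lG lg].
  by apply: in_ideal_sub l'f => x x_l; rewrite mem_cat x_l.
by apply: in_ideal_sub lg => x x_l; rewrite mem_cat x_l orbT.
Qed.

Lemma in_gen_ideal_trans G f : (forall g, g \in G -> in_gen_ideal g) ->
  in_ideal G f -> in_gen_ideal f.
Proof.
move=> /in_gen_ideal_seq [l [lS lG]] Gf; exists l; split=> //.
by apply: in_ideal_trans Gf; apply: lG.
Qed.

Lemma in_gen_ideal0 : in_gen_ideal 0.
Proof. by exists [::]; split=> //; apply: in_ideal0. Qed.

Lemma in_gen_idealD f g : in_gen_ideal f -> in_gen_ideal g -> in_gen_ideal (f + g).
Proof.
move=> If Ig; apply: (@in_gen_ideal_trans [:: f; g]).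
  by move=> h; rewrite !inE => /orP[]/eqP->.
by apply: in_idealD; apply: mem_in_ideal; rewrite !inE eqxx ?orbT.
Qed.

Lemma in_gen_idealMl c f : in_gen_ideal f -> in_gen_ideal (c * f).
Proof. by move=> [l [lS lf]]; exists l; split=> //; apply: in_idealMl. Qed.

Notation lead_ideal := (top_coef in_gen_ideal).

Lemma lead_ideal_leq d d' r : (d <= d')%N -> lead_ideal d r -> lead_ideal d' r.
Proof. by apply: top_coef_leq => f; apply: in_gen_idealMl. Qed.

Lemma lead_ideal_in_ideal d cs r :
  (forall c, c \in cs -> lead_ideal d c) -> in_ideal cs r -> lead_ideal d r.
Proof.
apply: top_coef_ideal; [exact: in_gen_ideal0 | exact: in_gen_idealD |].
by move=> c f; apply: in_gen_idealMl.
Qed.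

Lemma lead_ideal_stable : exists D, forall d r, lead_ideal d r -> lead_ideal D r.
Proof.
have [rs [rsL Lrs]] := noethR (fun r => exists d, lead_ideal d r).
have [D DL] : exists D, forall r, r \in rs -> lead_ideal D r.
  elim: rs rsL {Lrs} => [|r rs IH] rsL; first by exists 0%N.
  have [d Ld] := rsL r (mem_head _ _).
  have [D DL] := IH (fun x x_rs => rsL x (@mem_behead _ (r :: rs) x x_rs)).
  exists (maxn d D) => x; rewrite inE => /orP[/eqP->|/DL DLx].
    by apply: lead_ideal_leq Ld; rewrite leq_maxl.
  by apply: lead_ideal_leq DLx; rewrite leq_maxr.
by exists D => d r Ldr; apply: lead_ideal_in_ideal DL (Lrs r _); exists d.
Qed.

Lemma merge_generators (T : eqType) (s : seq T) (P : T -> seq {poly R} -> Prop) :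
  (forall t G G', {subset G <= G'} -> P t G -> P t G') ->
  (forall t, t \in s -> exists G, (forall g, g \in G -> in_gen_ideal g) /\ P t G) ->
  exists G, (forall g, g \in G -> in_gen_ideal g) /\ (forall t, t \in s -> P t G).
Proof.
move=> Pmono; elim: s => [|t s IH] sP; first by exists [::].
have [G [GI PG]] := IH (fun t' st' => sP t' (@mem_behead _ (t :: s) t' st')).
have [G' [G'I PG']] := sP t (mem_head _ _).
exists (G' ++ G); split=> [g|t']; first by rewrite mem_cat => /orP[/G'I|/GI].
rewrite inE => /orP[/eqP->|/PG PGt].
  by apply: Pmono PG' => g g_G; rewrite mem_cat g_G.
by apply: Pmono PGt => g g_G; rewrite mem_cat g_G orbT.
Qed.

Lemma lead_ideal_lift d : exists G, (forall g, g \in G -> in_gen_ideal g) /\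
  (forall r, lead_ideal d r -> top_coef (in_ideal G) d r).
Proof.
have [cs [csL Lcs]] := noethR (lead_ideal d).
have [G [GI csG]] : exists G, (forall g, g \in G -> in_gen_ideal g) /\
    (forall c, c \in cs -> top_coef (in_ideal G) d c).
  apply: merge_generators => [c G G' GG'|c /csL [f [If fP]]].
    by apply: top_coef_sub => f; apply: in_ideal_sub GG'.
  exists [:: f]; split=> [g|]; first by rewrite inE => /eqP->.
  by exists f; split=> //; apply: mem_in_ideal; rewrite inE.
by exists G; split=> // r /Lcs; apply: top_coef_in_ideal.
Qed.

(* Reduce the degree of [f] by subtracting a multiple of a member of [G] with the same
   leading coefficient. *)
Lemma in_ideal_of_lead_ideal G D :
  (forall g, g \in G -> in_gen_ideal g) ->
  (forall d r, lead_ideal d r -> lead_ideal D r) ->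
  (forall d r, (d <= D)%N -> lead_ideal d r -> top_coef (in_ideal G) d r) ->
  forall f, in_gen_ideal f -> in_ideal G f.
Proof.
move=> GI LD LG f If; move: {2}(size f) (leqnn (size f)) => n sf.
elim: n f sf If => [|n IH] f sf If.
  by move: sf; rewrite leqn0 size_poly_eq0 => /eqP->; apply: in_ideal0.
have [sfn|_] := leqP (size f) n; first exact: IH.
have [d [dn dD Ld]] : exists d, [/\ d <= n, d <= D & lead_ideal d f`_n]%N.
  have Ln : lead_ideal n f`_n by exists f.
  have [nD|Dn] := leqP n D; first by exists n.
  by exists D; split => //; [apply: ltnW | apply: LD Ln].
have [h [Gh [sh hd]]] := LG d _ dD Ld.
pose f' := f - 'X^(n - d) * h.
have sf' : (size f' <= n)%N by apply: size_sub_lead_cancel.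
have -> : f = f' + 'X^(n - d) * h by rewrite subrK.
apply: in_idealD; last exact: in_idealMl.
apply: IH sf' _; apply: in_gen_idealD If _; rewrite -mulNr.
by apply/in_gen_idealMl/(in_gen_ideal_trans GI).
Qed.

End GeneratedIdeal.

Theorem noetherian_poly : noetherian {poly R}.
Proof.
move=> S; have [D LD] := lead_ideal_stable S.
have [G [GI LG]] : exists G, (forall g, g \in G -> in_gen_ideal S g) /\
    (forall d, d \in iota 0 D.+1 -> forall r, top_coef (in_gen_ideal S) d r ->
       top_coef (in_ideal G) d r).
  apply: merge_generators => [d G G' GG' PG r /PG|d _]; last exact: lead_ideal_lift.
  by apply: top_coef_sub => f; apply: in_ideal_sub GG'.
have [l [lS lG]] := in_gen_ideal_seq GI.
exists l; split=> // f Sf; apply: in_ideal_trans lG _.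
apply: (in_ideal_of_lead_ideal GI LD) => [d r dD|]; first by apply: LG; rewrite mem_iota.
by exists [:: f]; split=> [g|]; [rewrite inE => /eqP-> | apply: mem_in_ideal; rewrite inE].
Qed.

End HilbertBasis.

Section IteratedPolynomials.
Variable K : fieldType.

Fixpoint ipoly (m : nat) : comNzRingType :=
  match m with 0 => K | m'.+1 => {poly ipoly m'} end.

Fixpoint ipolyC (m : nat) : K -> ipoly m :=
  match m return K -> ipoly m with
  | 0 => id
  | m'.+1 => fun c => (ipolyC m' c)%:P
  end.

Fixpoint ipolyX (m i : nat) : ipoly m :=
  match m return ipoly m with
  | 0 => 0
  | m'.+1 => if i == m' then 'X else (ipolyX m' i)%:P
  end.

Variable x : nat -> K.

Fixpoint ipoly_eval (m : nat) : ipoly m -> K :=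
  match m return ipoly m -> K with
  | 0 => id
  | m'.+1 => fun p => ipoly_eval p.[ipolyC m' (x m')]
  end.

Lemma ipoly_evalD m (p q : ipoly m) : ipoly_eval (p + q) = ipoly_eval p + ipoly_eval q.
Proof. by elim: m p q => [|m IH] //= p q; rewrite hornerD IH. Qed.

Lemma ipoly_evalM m (p q : ipoly m) : ipoly_eval (p * q) = ipoly_eval p * ipoly_eval q.
Proof. by elim: m p q => [|m IH] //= p q; rewrite hornerM IH. Qed.

Lemma ipoly_evalN m (p : ipoly m) : ipoly_eval (- p) = - ipoly_eval p.
Proof. by elim: m p => [|m IH] //= p; rewrite hornerN IH. Qed.

Lemma ipoly_eval0 m : ipoly_eval (0 : ipoly m) = 0.
Proof. by elim: m => [|m IH] //=; rewrite horner0 IH. Qed.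

Lemma ipoly_evalC m c : ipoly_eval (ipolyC m c) = c.
Proof. by elim: m => [|m IH] //=; rewrite hornerC IH. Qed.

Lemma ipoly_evalX m i : (i < m)%N -> ipoly_eval (ipolyX m i) = x i.
Proof.
elim: m => [|m IH] //=; rewrite ltnS leq_eqVlt => /orP[/eqP->|im].
  by rewrite eqxx hornerX ipoly_evalC.
by rewrite (ltn_eqF im) hornerC IH.
Qed.

Lemma noetherian_ipoly m : noetherian (ipoly m).
Proof. by elim: m => [|m IH] /=; [exact: noetherian_field | exact: noetherian_poly]. Qed.

End IteratedPolynomials.

Section FinitelyManyEquations.
Variables (K : fieldType) (m : nat).

Fixpoint to_ipoly (p : mpoly K m) : ipoly K m :=
  match p with
  | PVar i => ipolyX K m i
  | PConst c => ipolyC m c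
  | PAdd p q => to_ipoly p + to_ipoly q
  | PMul p q => to_ipoly p * to_ipoly q
  | POpp p => - to_ipoly p
  end.

Definition row_nth (v : 'rV[K]_m) (j : nat) : K :=
  if insub j is Some i then v 0 i else 0.

Lemma row_nthE v (i : 'I_m) : row_nth v i = v 0 i.
Proof. by rewrite /row_nth valK. Qed.

Lemma meval_ipoly v p : meval v p = ipoly_eval (row_nth v) (to_ipoly p).
Proof.
elim: p => /= [i|c|p -> q ->|p -> q ->|p ->].
- by rewrite ipoly_evalX // row_nthE.
- by rewrite ipoly_evalC.
- by rewrite ipoly_evalD.
- by rewrite ipoly_evalM.
- by rewrite ipoly_evalN.
Qed.

Theorem zero_set_finite (S : mpoly K m -> Prop) :
  exists (k : nat) (q : 'I_k -> mpoly K m), (forall i, S (q i)) /\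
    forall v, zero_set S v <-> (forall i, meval v (q i) = 0).
Proof.
pose S' t := exists p, S p /\ to_ipoly p = t.
have [ts [tsS' S'ts]] := @noetherian_ipoly K m S'.
pose pre t := epsilon (inhabits (PConst m 0)) (fun p => S p /\ to_ipoly p = t).
have preP t : t \in ts -> S (pre t) /\ to_ipoly (pre t) = t.
  by move=> /tsS'; apply: epsilon_spec.
pose q (i : 'I_(size ts)) := pre ts`_i.
have Sq i : S (q i) by have [] := preP _ (mem_nth 0 (ltn_ord i)).
exists (size ts), q; split=> // v; split=> [Sv i|qv p Sp]; first exact: Sv.
rewrite meval_ipoly; have : in_ideal ts (to_ipoly p) by apply: S'ts; exists p.
elim=> [|a r z a_ts _ IH]; first exact: ipoly_eval0.
rewrite ipoly_evalD ipoly_evalM IH addr0.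
have a_i : (index a ts < size ts)%N by rewrite index_mem.
have := qv (Ordinal a_i); rewrite meval_ipoly /q /= nth_index // (preP a a_ts).2.
by move->; rewrite mulr0.
Qed.

End FinitelyManyEquations.

(** * Quantifier elimination and definable sets *)

Section FirstOrder.
Variable R : unitRingType.
Implicit Types (e : seq R) (f : GRing.formula R) (t : GRing.term R).

Definition eq_prefix n e e' := forall j, (j < n)%N -> e`_j = e'`_j.

Lemma eq_prefix_maxl n1 n2 e e' : eq_prefix (maxn n1 n2) e e' -> eq_prefix n1 e e'.
Proof. by move=> ee' j jn; apply: ee'; rewrite leq_max jn. Qed.

Lemma eq_prefix_maxr n1 n2 e e' : eq_prefix (maxn n1 n2) e e' -> eq_prefix n2 e e'.
Proof. by move=> ee' j jn; apply: ee'; rewrite leq_max jn orbT. Qed.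

Lemma eq_prefix_set_nth n e e' i x :
  eq_prefix n e e' -> eq_prefix n (set_nth 0 e i x) (set_nth 0 e' i x).
Proof. by move=> ee' j jn; rewrite !nth_set_nth /=; case: eqP => // _; apply: ee'. Qed.

Lemma eval_eq_prefix t e e' :
  eq_prefix (GRing.ub_var t) e e' -> GRing.eval e t = GRing.eval e' t.
Proof.
elim: t => //= [i|t1 IH1 t2 IH2|t1 IH1|t1 IH1 n|t1 IH1 t2 IH2|t1 IH1|t1 IH1 n] ee'.
- exact: ee'.
1,4: by rewrite (IH1 (eq_prefix_maxl ee')) (IH2 (eq_prefix_maxr ee')).
all: by rewrite IH1.
Qed.

Fixpoint formula_ub f : nat :=
  match f with
  | GRing.Bool _ => 0
  | GRing.Equal t1 t2 => maxn (GRing.ub_var t1) (GRing.ub_var t2)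
  | GRing.Unit t => GRing.ub_var t
  | GRing.And f1 f2 | GRing.Or f1 f2 | GRing.Implies f1 f2 =>
      maxn (formula_ub f1) (formula_ub f2)
  | GRing.Not f1 | GRing.Exists _ f1 | GRing.Forall _ f1 => formula_ub f1
  end.

Lemma holds_eq_prefix f e e' :
  eq_prefix (formula_ub f) e e' -> GRing.holds e f <-> GRing.holds e' f.
Proof.
elim: f e e' => //= [t1 t2|t|f1 IH1 f2 IH2|f1 IH1 f2 IH2|f1 IH1 f2 IH2|f1 IH1|i f1 IH1|i f1 IH1]
  e e' ee'.
- by rewrite (eval_eq_prefix (eq_prefix_maxl ee')) (eval_eq_prefix (eq_prefix_maxr ee')).
- by rewrite (eval_eq_prefix ee').
1-3: by rewrite (IH1 _ _ (eq_prefix_maxl ee')) (IH2 _ _ (eq_prefix_maxr ee')).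
- by rewrite (IH1 _ _ ee').
- by split=> -[x hx]; exists x; apply/(IH1 _ _ (eq_prefix_set_nth i x ee')).
- by split=> hf x; apply/(IH1 _ _ (eq_prefix_set_nth i x ee')); apply: hf.
Qed.

Definition definable (Q : seq R -> Prop) :=
  exists f, forall e, GRing.holds e f <-> Q e.

Lemma definable_ext (Q Q' : seq R -> Prop) :
  (forall e, Q e <-> Q' e) -> definable Q -> definable Q'.
Proof. by move=> QQ' [f fQ]; exists f => e; rewrite fQ. Qed.

Lemma definable_eq_prefix Q : definable Q ->
  exists n, forall e e', eq_prefix n e e' -> Q e -> Q e'.
Proof.
by move=> [f fQ]; exists (formula_ub f) => e e' ee' /fQ /(holds_eq_prefix ee') /fQ.
Qed.

Lemma definableI Q1 Q2 : definable Q1 -> definable Q2 -> definable (fun e => Q1 e /\ Q2 e).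
Proof. by move=> [f1 fQ1] [f2 fQ2]; exists (GRing.And f1 f2) => e /=; rewrite fQ1 fQ2. Qed.

Lemma definableU Q1 Q2 : definable Q1 -> definable Q2 -> definable (fun e => Q1 e \/ Q2 e).
Proof. by move=> [f1 fQ1] [f2 fQ2]; exists (GRing.Or f1 f2) => e /=; rewrite fQ1 fQ2. Qed.

Lemma definableC Q : definable Q -> definable (fun e => ~ Q e).
Proof. by move=> [f fQ]; exists (GRing.Not f) => e /=; rewrite fQ. Qed.

Lemma definable_eval_eq t1 t2 : definable (fun e => GRing.eval e t1 = GRing.eval e t2).
Proof. by exists (GRing.Equal t1 t2). Qed.

Lemma definable_all_seq (T : eqType) (s : seq T) (Q : T -> seq R -> Prop) :
  (forall x, definable (Q x)) -> definable (fun e => forall x, x \in s -> Q x e).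
Proof.
move=> Qdef; elim: s => [|x s IH]; first by exists (GRing.Bool true).
apply: definable_ext (definableI (Qdef x) IH) => e; split=> [[Qx Qs] y|Qxs].
  by rewrite inE => /orP[/eqP->|/Qs].
by split=> [|y ys]; apply: Qxs; rewrite inE ?eqxx ?ys ?orbT.
Qed.

Lemma definable_ex_seq (T : eqType) (s : seq T) (Q : T -> seq R -> Prop) :
  (forall x, definable (Q x)) -> definable (fun e => exists2 x, x \in s & Q x e).
Proof.
move=> Qdef; elim: s => [|x s IH]; first by exists (GRing.Bool false) => e; split=> // -[].
apply: definable_ext (definableU (Qdef x) IH) => e; split=> [[Qx|[y ys Qy]]|[y]].
- by exists x; rewrite ?inE ?eqxx.
- by exists y; rewrite ?inE ?ys ?orbT.
- by rewrite inE => /orP[/eqP->|ys Qy]; [left | right; exists y].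
Qed.

Lemma definable_forall (T : finType) (Q : T -> seq R -> Prop) :
  (forall x, definable (Q x)) -> definable (fun e => forall x, Q x e).
Proof.
move=> /(definable_all_seq (enum T)); apply: definable_ext => e.
by split=> Qe x; [apply: Qe; rewrite mem_enum | move=> _; apply: Qe].
Qed.

Lemma definable_exists (T : finType) (Q : T -> seq R -> Prop) :
  (forall x, definable (Q x)) -> definable (fun e => exists x, Q x e).
Proof.
move=> /(definable_ex_seq (enum T)); apply: definable_ext => e.
by split=> [[x _ Qx]|[x Qx]]; exists x; rewrite ?mem_enum.
Qed.

End FirstOrder.

Section FiniteOrCofinite.
Variable K : closedFieldType.
Implicit Types (f : GRing.formula K) (t : GRing.term K).

Definition fin_or_cofin (P : K -> Prop) :=
  exists (l : seq K) (b : bool), forall a, P a <-> (a \in l) != b.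

Lemma fin_or_cofin_ext P P' : (forall a, P a <-> P' a) -> fin_or_cofin P -> fin_or_cofin P'.
Proof. by move=> PP' [l [b lP]]; exists l, b => a; rewrite -PP'. Qed.

Lemma fin_or_cofin_const (b : bool) : fin_or_cofin (fun _ => b).
Proof. by exists [::], b => a; rewrite in_nil; case: b. Qed.

Lemma fin_or_cofinC P : fin_or_cofin P -> fin_or_cofin (fun a => ~ P a).
Proof.
move=> [l [b lP]]; exists l, (~~ b) => a; rewrite lP {lP}.
by case: (a \in l); case: b; split=> // /(_ isT).
Qed.

Lemma fin_or_cofinI P P' : fin_or_cofin P -> fin_or_cofin P' -> fin_or_cofin (fun a => P a /\ P' a).
Proof.
move=> [l [b lP]] [l' [b' lP']].
have {lP lP'} andE a : P a /\ P' a <-> ((a \in l) != b) && ((a \in l') != b').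
  by rewrite lP lP' (rwP andP).
case: b andE => andE; last first.
  exists [seq a <- l | (a \in l') != b'], false => a.
  by rewrite {}andE mem_filter; case: (a \in l); case: (a \in l'); case: b'.
case: b' andE => andE.
  by exists (l ++ l'), true => a; rewrite {}andE mem_cat; case: (a \in l); case: (a \in l').
exists [seq a <- l' | a \notin l], false => a.
by rewrite {}andE mem_filter; case: (a \in l); case: (a \in l').
Qed.

Lemma fin_or_cofinU P P' : fin_or_cofin P -> fin_or_cofin P' -> fin_or_cofin (fun a => P a \/ P' a).
Proof.
move=> fP fP'.
apply: fin_or_cofin_ext (fin_or_cofinC (fin_or_cofinI (fin_or_cofinC fP) (fin_or_cofinC fP'))).
by move=> a; split=> [|]; [move=> ?; apply: NNPP; tauto | tauto].
Qed.

Lemma fin_or_cofin_root (p : {poly K}) : fin_or_cofin (root p).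
Proof.
have [->|p0] := eqVneq p 0.
  by apply: fin_or_cofin_ext (fin_or_cofin_const true) => a; rewrite root0.
have [r ->] := closed_field_poly_normal p.
by exists r, false => a; rewrite rootZ ?lead_coef_eq0 // root_prod_XsubC; case: (a \in r).
Qed.

Section OneVariable.
Variable s : seq K.

Fixpoint term_poly t : {poly K} :=
  match t with
  | GRing.Var j => if j == size s then 'X else (s`_j)%:P
  | GRing.Const c => c%:P
  | GRing.NatConst n => n%:R
  | GRing.Add t1 t2 => term_poly t1 + term_poly t2
  | GRing.Opp t1 => - term_poly t1
  | GRing.NatMul t1 n => term_poly t1 *+ n
  | GRing.Mul t1 t2 => term_poly t1 * term_poly t2
  | GRing.Inv _ => 0
  | GRing.Exp t1 n => term_poly t1 ^+ n
  end.

Lemma term_polyP t a : GRing.rterm t -> GRing.eval (rcons s a) t = (term_poly t).[a].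
Proof.
elim: t => //=.
- move=> j _; rewrite nth_rcons; case: ltnP => [js|sj]; first by rewrite (ltn_eqF js) hornerC.
  by case: eqP => [_|_]; rewrite ?hornerX // nth_default // hornerC.
- by move=> c _; rewrite hornerC.
- by move=> n _; rewrite -polyC_natr hornerC.
- by move=> t1 IH1 t2 IH2 /andP[r1 r2]; rewrite IH1 // IH2 // hornerD.
- by move=> t1 IH1 r1; rewrite IH1 // hornerN.
- by move=> t1 IH1 n r1; rewrite IH1 // hornerMn.
- by move=> t1 IH1 t2 IH2 /andP[r1 r2]; rewrite IH1 // IH2 // hornerM.
- by move=> t1 IH1 n r1; rewrite IH1 // horner_exp.
Qed.

Lemma fin_or_cofin_qf f : GRing.qf_form f -> GRing.rformula f ->
  fin_or_cofin (fun a => GRing.qf_eval (rcons s a) f).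
Proof.
elim: f => //= [b|t1 t2|f1 IH1 f2 IH2|f1 IH1 f2 IH2|f1 IH1 f2 IH2|f1 IH1].
- by move=> _ _; apply: fin_or_cofin_const.
- move=> _ /andP[r1 r2]; apply: fin_or_cofin_ext (fin_or_cofin_root (term_poly t1 - term_poly t2)).
  by move=> a; rewrite !term_polyP // rootE hornerD hornerN subr_eq0.
- move=> /andP[q1 q2] /andP[r1 r2]; apply: fin_or_cofin_ext (fin_or_cofinI (IH1 q1 r1) (IH2 q2 r2)).
  by move=> a; split=> [[-> ->]|/andP[-> ->]].
- move=> /andP[q1 q2] /andP[r1 r2]; apply: fin_or_cofin_ext (fin_or_cofinU (IH1 q1 r1) (IH2 q2 r2)).
  by move=> a; split=> [[]->|/orP[]->]; rewrite ?orbT; auto.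
- move=> /andP[q1 q2] /andP[r1 r2].
  apply: fin_or_cofin_ext (fin_or_cofinU (fin_or_cofinC (IH1 q1 r1)) (IH2 q2 r2)) => a.
  split=> [[/negP/negbTE->|->]|] //; first by rewrite implybT.
  by case: (GRing.qf_eval _ f1) => /= h; [right | left].
- move=> q1 r1; apply: fin_or_cofin_ext (fin_or_cofinC (IH1 q1 r1)).
  by move=> a; split=> /negP.
Qed.

Lemma fin_or_cofin_holds f : fin_or_cofin (fun a => GRing.holds (rcons s a) f).
Proof.
pose qe := GRing.quantifier_elim (@ClosedFieldQE.ex_elim K) (GRing.to_rform f).
have qeP e : GRing.holds e f <-> GRing.qf_eval e qe.
  rewrite -GRing.to_rformP; apply: rwP.
  apply: (GRing.quantifier_elim_rformP (@ClosedFieldQE.wf_ex_elim K)).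
    exact: (ClosedFieldQE.holds_ex_elim (@solve_monicpoly K)).
  exact: GRing.to_rform_rformula.
have /andP[qf_qe r_qe] := GRing.quantifier_elim_wf (@ClosedFieldQE.wf_ex_elim K)
   (GRing.to_rform_rformula f).
by apply: fin_or_cofin_ext (fin_or_cofin_qf qf_qe r_qe) => a; rewrite qeP.
Qed.

End OneVariable.

(* Quantify away the coordinates beyond [size s]; by quantifier elimination what remains
   is a condition on the coordinate [size s] alone. *)
Lemma fin_or_cofin_extension (s : seq K) (Q : seq K -> Prop) : definable Q ->
  fin_or_cofin (fun a => exists e, eq_prefix (size s).+1 (rcons s a) e /\ Q e).
Proof.
move=> [f fQ]; set i := size s; set B := formula_ub f.
apply: fin_or_cofin_ext (fin_or_cofin_holds s (foldr GRing.Exists f (iota i.+1 B))) => a.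
rewrite -GRing.foldExistsP; split=> [[e se fe]|[e [se Qe]]].
  exists e; split; last exact/fQ.
  by move=> j ji; apply: se; rewrite !inE mem_iota negb_and -ltnNge ji.
exists (take (i.+1 + B) e); last first.
  apply/(holds_eq_prefix (e := e)); last exact/fQ.
  by move=> j jB; rewrite nth_take // (leq_trans jB) // leq_addl.
move=> j; rewrite !inE mem_iota negb_and -ltnNge -leqNgt => /orP[ji|Bj].
  by rewrite nth_take ?se ?size_rcons // (leq_trans ji) // leq_addr.
rewrite !nth_default ?size_take ?size_rcons //; first by apply: leq_trans Bj; rewrite geq_minl.
by apply: leq_trans Bj; rewrite leq_addr.
Qed.

End FiniteOrCofinite.

Section Definability.
Variable K : fieldType.
Implicit Types (e : seq K) (m o : nat).

Definition block m o e : 'rV[K]_m := \row_(i < m) e`_(o + i).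

Fixpoint mpoly_term m o (p : mpoly K m) : GRing.term K :=
  match p with
  | PVar i => GRing.Var _ (o + i)
  | PConst c => GRing.Const c
  | PAdd p q => GRing.Add (mpoly_term o p) (mpoly_term o q)
  | PMul p q => GRing.Mul (mpoly_term o p) (mpoly_term o q)
  | POpp p => GRing.Opp (mpoly_term o p)
  end.

Lemma eval_mpoly_term m o (p : mpoly K m) e :
  GRing.eval e (mpoly_term o p) = meval (block m o e) p.
Proof. by elim: p => //= [i|p -> q ->|p -> q ->|p ->] //; rewrite mxE. Qed.

Definition definable_block m o (Y : 'rV[K]_m -> Prop) := definable (fun e => Y (block m o e)).

Lemma definable_block_ext m o (Y Y' : 'rV[K]_m -> Prop) :
  (forall v, Y' v <-> Y v) -> definable_block o Y -> definable_block o Y'.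
Proof. by move=> YY'; apply: definable_ext => e; rewrite YY'. Qed.

Lemma definable_zero_set m o (S : mpoly K m -> Prop) : definable_block o (zero_set S).
Proof.
have [k [q [_ qS]]] := zero_set_finite S.
apply: (definable_block_ext qS); apply: definable_forall => i.
apply: definable_ext (definable_eval_eq (mpoly_term o (q i)) (GRing.Const 0)) => e.
by rewrite eval_mpoly_term.
Qed.

Lemma definable_closed_in m o (A C : 'rV[K]_m -> Prop) :
  definable_block o A -> closed_in A C -> definable_block o C.
Proof.
move=> Adef [S CS]; apply: (definable_block_ext CS).
exact: definableI Adef (definable_zero_set o S).
Qed.

Lemma definable_constructible_in m o (A X : 'rV[K]_m -> Prop) :
  algebraic_set A -> constructible_in A X -> definable_block o X.
Proof.
move=> [SA AS] [k [L [Llc XL]]].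
have Adef : definable_block o A by apply: (definable_block_ext AS); apply: definable_zero_set.
apply: (definable_block_ext XL); apply: definable_exists => i.
have [U [C [[C' [C'A UC']] [CA LUC]]]] := Llc i.
apply: (definable_block_ext LUC); apply: definableI; last exact: definable_closed_in Adef CA.
apply: (definable_block_ext UC'); apply: (definableI Adef).
by apply/definableC/(definable_closed_in Adef C'A).
Qed.

Lemma definable_poly_map a b oa ob (P : 'I_b -> mpoly K a) :
  definable (fun e => block b ob e = poly_map P (block a oa e)).
Proof.
pose Q (j : 'I_b) e := GRing.eval e (GRing.Var _ (ob + j)) = GRing.eval e (mpoly_term oa (P j)).
apply: definable_ext (definable_forall (Q := Q) (fun j => definable_eval_eq _ _)) => e.
split=> [eQ|/rowP eP j]; first by apply/rowP => j; move: (eQ j); rewrite /Q /= !mxE eval_mpoly_term.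
by rewrite /Q /= eval_mpoly_term; move: (eP j); rewrite !mxE.
Qed.

End Definability.

(** * Decreasing chains and the realization of conditions *)

Section DecreasingChains.
Variables (T : eqType) (P : nat -> T -> Prop).
Hypothesis P_decr : forall k a, P k.+1 a -> P k a.
Hypothesis P_nonempty : forall k, exists a, P k a.

Lemma chain_leq k k' a : (k <= k')%N -> P k' a -> P k a.
Proof. by move=> /subnK <-; elim: (k' - k)%N => //= n IH /P_decr. Qed.

Lemma finite_chain_meet k0 (l : seq T) :
  (forall a, P k0 a -> a \in l) -> exists a, forall k, P k a.
Proof.
move=> Pl; apply: NNPP => noa.
have [M lM] : exists M, forall a, a \in l -> ~ P M a.
  elim: l {Pl} => [|b l [M lM]]; first by exists 0%N.
  have /not_all_ex_not [kb nPb] : ~ forall k, P k b by move=> Pb; apply: noa; exists b.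
  exists (maxn kb M) => a; rewrite inE => /orP[/eqP->|/lM nPa] Pa.
    exact/nPb/(chain_leq (leq_maxl _ _) Pa).
  exact/nPa/(chain_leq (leq_maxr _ _) Pa).
have [a Pa] := P_nonempty (maxn k0 M).
by apply: (lM a); [apply/Pl/(chain_leq (leq_maxl _ _) Pa) | apply: chain_leq (leq_maxr _ _) Pa].
Qed.

(* The complements are countably many finite sets, which cannot cover T. *)
Lemma cofinite_chain_meet : uncountable T ->
  (forall k, exists l : seq T, forall a, a \notin l -> P k a) -> exists a, forall k, P k a.
Proof.
move=> uncT /choice [ll llP]; have [x0 _] := P_nonempty 0.
apply: NNPP => noa; apply: uncT.
exists (fun n => if unpickle n is Some (k, j) then nth x0 (ll k) j else x0) => a.
have /not_all_ex_not [k nPka] : ~ forall k, P k a by move=> Pa; apply: noa; exists a.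
exists (pickle (k, index a (ll k))); rewrite pickleK nth_index //.
by apply/negPn/negP => /llP.
Qed.

End DecreasingChains.

Lemma fin_or_cofin_chain_meet (K : closedFieldType) (P : nat -> K -> Prop) :
  uncountable K -> (forall k a, P k.+1 a -> P k a) -> (forall k, exists a, P k a) ->
  (forall k, fin_or_cofin (P k)) -> exists a, forall k, P k a.
Proof.
move=> uncK P_decr P_ne Pfc.
have [[k0 [l lP]]|cofin] := classic (exists k0 (l : seq K), forall a, P k0 a -> a \in l).
  exact: finite_chain_meet lP.
apply: cofinite_chain_meet => // k; have [l [[] lP]] := Pfc k.
  by exists l => a; rewrite lP => /negbTE->.
by case: cofin; exists k, l => a /lP; case: (a \in l).
Qed.

Section Realization.
Variable K : closedFieldType.
Hypothesis uncK : uncountable K.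
Variable Q : nat -> seq K -> Prop.
Hypothesis Qdef : forall j, definable (Q j).

Definition sat_ext (s : seq K) :=
  forall k, exists e, eq_prefix (size s) s e /\ forall j, (j <= k)%N -> Q j e.

Lemma sat_ext_rcons s : sat_ext s -> exists a, sat_ext (rcons s a).
Proof.
move=> sat_s.
pose P k a := exists e, eq_prefix (size s).+1 (rcons s a) e /\ forall j, (j <= k)%N -> Q j e.
have [a Pa] : exists a, forall k, P k a.
  apply: (@fin_or_cofin_chain_meet _ P uncK) => [k a [e [se Qe]]|k|k].
  - by exists e; split=> // j jk; apply/Qe/leqW.
  - have [e [se Qe]] := sat_s k; exists e`_(size s), e; split=> // j.
    rewrite ltnS leq_eqVlt nth_rcons => /orP[/eqP->|js]; first by rewrite ltnn eqxx.
    by rewrite js se.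
  - apply: fin_or_cofin_extension.
    apply: definable_ext (definable_all_seq (iota 0 k.+1) Qdef) => e.
    split=> Qe j; last by rewrite mem_iota add0n ltnS => /andP[_ /Qe].
    by move=> jk; apply: Qe; rewrite mem_iota add0n ltnS jk.
by exists a => k; have [e [se Qe]] := Pa k; exists e; rewrite size_rcons.
Qed.

(* A compactness argument: choose the coordinates one at a time, keeping every finite
   set of conditions satisfiable. *)
Theorem realize : (forall k, exists e, forall j, (j <= k)%N -> Q j e) ->
  exists g : nat -> K, forall j, exists n, forall N, (n <= N)%N -> Q j (mkseq g N).
Proof.
move=> Qsat; have sat0 : sat_ext [::] by move=> k; have [e Qe] := Qsat k; exists e.
have /choice [pick pickP] : forall s, exists a, sat_ext s -> sat_ext (rcons s a).
  move=> s; have [/sat_ext_rcons [a sat_sa]|nsat] := classic (sat_ext s); first by exists a.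
  by exists 0 => /nsat.
pose g n := pick (iter n (fun s => rcons s (pick s)) [::]).
have gE n : iter n (fun s => rcons s (pick s)) [::] = mkseq g n.
  by elim: n => //= n IH; rewrite mkseqS -IH.
have sat_g N : sat_ext (mkseq g N) by rewrite -gE; elim: N => //= N IH; apply: pickP.
exists g => j; have [n Qn] := definable_eq_prefix (Qdef j).
exists n => N nN; have [e [ge Qe]] := sat_g N j.
by apply: Qn (Qe j (leqnn j)) => i iN; rewrite ge // size_mkseq (leq_trans iN).
Qed.

End Realization.

(** * Projective sequences *)

Lemma constructible_in_sub (K : nzRingType) m (A X : 'rV[K]_m -> Prop) v :
  constructible_in A X -> X v -> A v.
Proof.
move=> [k [L [Llc XL]]] /XL [i]; have [U [C [_ [[S CS] LUC]]]] := Llc i.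
by move=> /LUC [_ /CS []].
Qed.

Lemma compatible_of_succ (T : nat -> Type) (A : forall n, T n -> Prop)
    (F : forall n m, T m -> T n) (x : forall n, T n) :
  (forall n y, A n y -> F n n y = y) ->
  (forall n m k, (n <= m)%N -> (m <= k)%N -> forall y, A k y -> F n k y = F n m (F m k y)) ->
  (forall n, A n (x n)) -> (forall n, x n = F n n.+1 (x n.+1)) ->
  forall n m, (n <= m)%N -> x n = F n m (x m).
Proof.
move=> Fid Fcomp Ax xF n m /subnK <-; elim: (m - n)%N => [|k IH]; first by rewrite Fid.
by rewrite addSn (Fcomp n (k + n) (k + n).+1) ?leq_addl // -xF.
Qed.

Section ProjectiveSequence.
Variables (K : closedFieldType) (d : nat -> nat).

(* A sequence of points x_n of K^(d n) is encoded as the single sequence of their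
   concatenated coordinates; x_n starts at [offset n]. *)
Definition offset n := (\sum_(j < n) d j)%N.

Lemma offsetS n : offset n.+1 = (offset n + d n)%N.
Proof. by rewrite /offset big_ord_recr. Qed.

Lemma leq_offset n m : (n <= m)%N -> (offset n <= offset m)%N.
Proof.
move=> /subnK <-; elim: (m - n)%N => // k IH.
by rewrite addSn offsetS (leq_trans IH) // leq_addr.
Qed.

Definition component n (e : seq K) : 'rV[K]_(d n) := block (d n) (offset n) e.

Fixpoint concat_points (x : forall n, 'rV[K]_(d n)) k : seq K :=
  if k is k'.+1 then concat_points x k' ++ mkseq (row_nth (x k')) (d k') else [::].

Lemma size_concat_points x k : size (concat_points x k) = offset k.
Proof.
elim: k => [|k IH] /=; first by rewrite /offset big_ord0.
by rewrite size_cat IH size_mkseq offsetS.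
Qed.

Lemma component_concat_points x n k : (n < k)%N -> component n (concat_points x k) = x n.
Proof.
move=> nk; apply/rowP => i; rewrite mxE.
elim: k nk => // k IH; rewrite ltnS leq_eqVlt => /orP[/eqP nk|nk] /=.
  by subst k; rewrite nth_cat size_concat_points ltnNge leq_addr /= addKn nth_mkseq // row_nthE.
rewrite nth_cat size_concat_points IH // (leq_trans _ (leq_offset nk)) //.
by rewrite offsetS ltn_add2l.
Qed.

Lemma component_mkseq (g : nat -> K) n N : (offset n.+1 <= N)%N ->
  component n (mkseq g N) = \row_(i < d n) g (offset n + i).
Proof.
move=> nN; apply/rowP => i; rewrite !mxE nth_mkseq //.
by apply: leq_trans nN; rewrite offsetS ltn_add2l.
Qed.

Variables (A X : forall n, 'rV[K]_(d n) -> Prop) (F : forall n m, 'rV[K]_(d m) -> 'rV[K]_(d n)).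
(* Under [Set Implicit Arguments] the index n would otherwise be implicit. *)
Arguments A : clear implicits.
Arguments X : clear implicits.
Arguments F : clear implicits.

Definition step_condition (n : nat) (e : seq K) :=
  [/\ X n (component n e), X n.+1 (component n.+1 e) &
       component n e = F n n.+1 (component n.+1 e)].

Lemma definable_step_condition :
  (forall n, algebraic_set (A n)) -> (forall n, regular_map (A n.+1) (A n) (F n n.+1)) ->
  (forall n, constructible_in (A n) (X n)) -> forall n, definable (step_condition n).
Proof.
move=> Aalg Freg Xcons n; have [_ [P FP]] := Freg n.
pose Q e := X n (component n e) /\ X n.+1 (component n.+1 e) /\
  component n e = poly_map P (component n.+1 e).
apply: (@definable_ext _ Q); last first.
  apply: definableI; first exact: definable_constructible_in (Xcons n).
  apply: definableI; first exact: definable_constructible_in (Xcons n.+1).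
  exact: definable_poly_map.
move=> e; rewrite /Q /step_condition; split=> [[Xn [Xn1 eq_n]]|[Xn Xn1 eq_n]].
  by split=> //; rewrite FP //; apply: constructible_in_sub (Xcons n.+1) Xn1.
by split; last split; rewrite // -FP //; apply: constructible_in_sub (Xcons n.+1) Xn1.
Qed.

Lemma step_condition_sat :
  (forall n m k, (n <= m)%N -> (m <= k)%N -> forall y, A k y -> F n k y = F n m (F m k y)) ->
  (forall n m, (n <= m)%N -> forall y, X m y -> X n (F n m y)) ->
  (forall n, exists y, X n y) -> (forall n y, X n y -> A n y) ->
  forall k, exists e, forall j, (j <= k)%N -> step_condition j e.
Proof.
move=> Fcomp XF Xne XA k; have [y Xy] := Xne k.+1.
exists (concat_points (fun n => F n k.+1 y) k.+2) => j jk.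
rewrite /step_condition !component_concat_points ?ltnS ?(leq_trans jk) //.
split; [apply: XF | apply: XF | apply: Fcomp] => //; [exact: leqW | exact: XA].
Qed.

End ProjectiveSequence.

Theorem theorem4p2 (K : closedFieldType) (HK : uncountable K)
  (d : nat -> nat)
  (A : forall n : nat, 'rV[K]_(d n) -> Prop)
  (F : forall n m : nat, 'rV[K]_(d m) -> 'rV[K]_(d n))
  (X : forall n : nat, 'rV[K]_(d n) -> Prop) :
  (forall n, algebraic_set (A n)) ->
  (forall n m, (n <= m)%N -> regular_map (A m) (A n) (F n m)) ->
  (forall n x, A n x -> F n n x = x) ->
  (forall n m k, (n <= m)%N -> (m <= k)%N ->
     forall x, A k x -> F n k x = F n m (F m k x)) ->
  (forall n, constructible_in (A n) (X n)) ->
  (forall n m, (n <= m)%N -> forall x, X m x -> X n (F n m x)) ->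
  (forall n, exists x, X n x) ->
  exists x : forall n, 'rV[K]_(d n),
    (forall n, X n (x n)) /\
    (forall n m, (n <= m)%N -> x n = F n m (x m)).
Proof.
move=> Aalg Freg Fid Fcomp Xcons XF Xne.
have XA n y : X n y -> A n y by apply: constructible_in_sub.
have Sdef := definable_step_condition Aalg (fun n => Freg n n.+1 (leqnSn n)) Xcons.
have [g Sg] := realize HK Sdef (step_condition_sat Fcomp XF Xne XA).
pose x n : 'rV[K]_(d n) := \row_(i < d n) g (offset d n + i).
have Sx n : X n (x n) /\ x n = F n n.+1 (x n.+1).
  have [N0 SN] := Sg n; have [Xn _ xnF] := SN (maxn N0 (offset d n.+2)) (leq_maxl _ _).
  by move: Xn xnF; rewrite !component_mkseq ?leq_max ?leq_offset ?orbT.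
exists x; split=> [n|]; first by case: (Sx n).
by apply: (compatible_of_succ Fid Fcomp) => n; [apply: XA | ]; case: (Sx n).
Qed.
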